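(* Let $\Gamma$ be a 3-colex and $c\neq c'$ colors. If $S$ is a $Z$-stabilizer of the 3D toric code on $\Gamma^{*\setminus cc'}$, then there exists a $Z$-stabilizer $\overline S$ of the color code on $\Gamma$ such that $\pi_{cc'}(\overline S)=S$ and $\pi_{xy}(\overline S)=I$ for every unordered pair $\{x,y\}$ of distinct colors with $\{x,y\}\neq\{c,c'\}$.
   Context: Colors are $\{r,b,g,y\}$. A 3-colex $\Gamma$ is a 3-dimensional cell complex without boundary in which every vertex is 4-valent and lies in exactly four 3-cells, and whose 3-cells are properly 4-colored: every face lies in exactly two 3-cells, which have different colors. The dual complex $\Gamma^*$ has an $i$-cell for every $(3-i)$-cell of $\Gamma$, with incidences reversed; every 3-cell of $\Gamma^*$ is a tetrahedron. A vertex of $\Gamma^*$ is given the color of the corresponding 3-cell of $\Gamma$, so the four vertices of each tetrahedron have distinct colors. An edge with endpoint colors $x,y$ is an $xy$-edge. The 3D color code on $\Gamma$ has one qubit per tetrahedron $\nu$ of $\Gamma^*$, $X$-stabilizer generators $\prod_{\nu\ni v}X_\nu$ for vertices $v$, and $Z$-stabilizer generators $B^Z_e=\prod_{\nu\supset e}Z_\nu$ for edges $e$; $Z$-stabilizers are products of the $B^Z_e$. For distinct colors $x,y$ with remaining colors $u,w$: $\pi_{xy}(\nu)$ is the unique $uw$-edge of the tetrahedron $\nu$, and $\pi_{xy}(\prod_{\nu\in\Omega}Z_\nu)=\prod_{\nu\in\Omega}Z_{\pi_{xy}(\nu)}$ (with $Z^2=I$); $\pi_{xy}=\pi_{yx}$.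 The minor complex $\Gamma^{*\setminus xy}$ has as vertices the $u$- and $w$-vertices of $\Gamma^*$, as edges the $uw$-edges of $\Gamma^*$, one face $f_e$ for each $xy$-edge $e$ of $\Gamma^*$ whose boundary $\partial f_e$ is the set of $uw$-edges of the tetrahedra containing $e$ (these form a cycle), and one 3-cell for each vertex of color $x$ or $y$. The 3D toric code on $\Gamma^{*\setminus xy}$ has qubits on edges and $Z$-stabilizer generators $B^Z_{f}=\prod_{t\in\partial f}Z_t$ for faces $f$; its $Z$-stabilizers are products of these. *)

From mathcomp Require Import all_boot all_algebra.
Set Implicit Arguments. Unset Strict Implicit. Unset Printing Implicit Defensive.
Import GRing.Theory.
Local Open Scope ring_scope.

Definition color := 'I_4.

(* The dual complex Gamma^* of a 3-colex Gamma.
   cV = vertices of Gamma^*   (= 3-cells of Gamma),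
   cE = edges of Gamma^*      (= faces of Gamma),
   cF = triangles of Gamma^*  (= edges of Gamma),
   cT = tetrahedra of Gamma^* (= vertices of Gamma).
   Simplices inside a tetrahedron/triangle are indexed by their color sets
   (each tetrahedron has exactly one vertex of each color). *)
Record colex3 := Colex3 {
  cV : finType; cE : finType; cF : finType; cT : finType;
  vcol : cV -> color;
  ecol : cE -> {set color};
  ev   : cE -> color -> cV;
  fcol : cF -> {set color};
  fe   : cF -> {set color} -> cE;
  fv   : cF -> color -> cV;
  tv   : cT -> color -> cV;
  te   : cT -> {set color} -> cE;
  tf   : cT -> {set color} -> cF;
  ecol_card : forall e, #|ecol e| = 2%N;
  ev_col : forall e c, c \in ecol e -> vcol (ev e c) = c;
  fcol_card : forall f, #|fcol f| = 3%N;
  fv_col : forall f c, c \in fcol f -> vcol (fv f c) = c;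
  fe_col : forall f (r : {set color}), r \subset fcol f -> #|r| = 2%N -> ecol (fe f r) = r;
  fe_ev : forall f (r : {set color}) c, r \subset fcol f -> #|r| = 2%N -> c \in r ->
            ev (fe f r) c = fv f c;
  tv_col : forall t c, vcol (tv t c) = c;
  te_col : forall t (s : {set color}), #|s| = 2%N -> ecol (te t s) = s;
  te_ev : forall t (s : {set color}) c, #|s| = 2%N -> c \in s -> ev (te t s) c = tv t c;
  tf_col : forall t (s : {set color}), #|s| = 3%N -> fcol (tf t s) = s;
  tf_fv : forall t (s : {set color}) c, #|s| = 3%N -> c \in s -> fv (tf t s) c = tv t c;
  tf_fe : forall t (s r : {set color}), #|s| = 3%N -> r \subset s -> #|r| = 2%N ->
            fe (tf t s) r = te t r;
  (* every edge of Gamma has two (distinct) endpoints, i.e. every triangle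
     of Gamma^* lies in exactly two tetrahedra *)
  tri_two : forall f, #|[set t | tf t (fcol f) == f]| = 2%N;
  (* "these form a cycle": the uw-edges of the (distinct) tetrahedra
     containing an xy-edge e are pairwise distinct *)
  link_cycle : forall e t1 t2,
      [exists s : {set color}, (#|s| == 2%N) && (te t1 s == e)] ->
      [exists s : {set color}, (#|s| == 2%N) && (te t2 s == e)] ->
      t1 != t2 -> te t1 (~: ecol e) != te t2 (~: ecol e)
}.

(* Z-type Pauli operators on a finite set of qubits X, up to phase:
   the F_2-vector of positions where Z acts; product = sum, I = 0. *)
Definition ZOp (X : finType) := {ffun X -> 'F_2}.

Section Codes.
Variable G : colex3.

Definition tcontains (t : cT G) (e : cE G) : bool :=
  [exists s : {set color}, (#|s| == 2%N) && (te t s == e)].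

Definition is_edge_of (x y : color) (e : cE G) : bool := ecol e == [set x; y].

Definition BZ (e : cE G) : ZOp (cT G) := [ffun t => (tcontains t e)%:R].

Definition cc_Zstab (S : ZOp (cT G)) : Prop :=
  exists A : {set cE G}, S = \sum_(e in A) BZ e.

Definition proj (x y : color) (t : cT G) : cE G := te t (~: [set x; y]).

Definition projZ (x y : color) (S : ZOp (cT G)) : ZOp (cE G) :=
  [ffun g => \sum_(t | proj x y t == g) S t].

(* boundary of the face f_e of the minor complex Gamma^{* \ xy}:
   the uw-edges of the tetrahedra containing the xy-edge e *)
Definition minor_bd (x y : color) (e : cE G) : {set cE G} :=
  [set proj x y t | t in [set t | tcontains t e]].

Definition BM (x y : color) (e : cE G) : ZOp (cE G) :=
  [ffun g => (g \in minor_bd x y e)%:R].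

Definition toric_Zstab (x y : color) (S : ZOp (cE G)) : Prop :=
  exists A : {set cE G}, (forall e, e \in A -> is_edge_of x y e) /\
                         S = \sum_(e in A) BM x y e.

End Codes.

(* Lift S = sum_{e in A} B^Z_{f_e} to Sbar = sum_{e in A} B^Z_e.  For a cc'-edge e,
   pi_cc' maps the tetrahedra around e bijectively onto the boundary of f_e
   (the uw-edges around e are pairwise distinct), so pi_cc'(B^Z_e) = B^Z_{f_e}.
   For any other pair {x,y}, pick z in {x,y} outside {c,c'}: the triangle of a
   tetrahedron opposite to its z-vertex contains both e and the projected edge,
   and it lies in exactly two tetrahedra, so pi_xy(B^Z_e) cancels in pairs. *)
From mathcomp Require Import all_boot all_algebra.
Set Implicit Arguments. Unset Strict Implicit. Unset Printing Implicit Defensive.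
Import GRing.Theory.
Local Open Scope ring_scope.

Lemma cardsC2 (x y : color) : x != y -> #|~: [set x; y]| = 2%N.
Proof.
move=> xy; have := cardsC [set x; y].
by rewrite card_ord cards2 xy => /(congr1 (subn^~ 2%N)); rewrite addKn.
Qed.

Lemma exists_notin_set2 (T : finType) (x y c c' : T) :
  x != y -> [set x; y] != [set c; c'] ->
  exists2 z, z \in [set x; y] & z \notin [set c; c'].
Proof.
move=> xy neq; case Hx: (x \in [set c; c']); last by exists x; rewrite ?Hx ?set21.
case Hy: (y \in [set c; c']); last by exists y; rewrite ?Hy ?set22.
exfalso; move: Hx Hy neq xy; rewrite !inE => /orP[]/eqP-> /orP[]/eqP->;
  by rewrite ?eqxx // setUC eqxx.
Qed.

Lemma sum_nat_F2 (T : finType) (P Q : pred T) :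
  \sum_(t | P t) ((Q t)%:R : 'F_2) = \sum_(t | P t && Q t) 1.
Proof. by rewrite big_mkcondr; apply: eq_bigr => t _; case: (Q t). Qed.

Section Projections.
Variable G : colex3.

Lemma te_eq_of_tf_eq (t t' : cT G) (s r : {set color}) :
  #|s| = 3%N -> tf t s = tf t' s -> r \subset s -> #|r| = 2%N -> te t r = te t' r.
Proof. by move=> s3 E rs r2; rewrite -(tf_fe t s3 rs r2) -(tf_fe t' s3 rs r2) E. Qed.

Lemma te_of_tcontains (t : cT G) (e : cE G) (c c' : color) :
  is_edge_of c c' e -> tcontains t e -> te t [set c; c'] = e.
Proof.
move=> /eqP He /existsP[s /andP[/eqP s2 /eqP Hs]].
have: ecol e = s by rewrite -Hs te_col.
by rewrite He => ->.
Qed.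

Lemma projZ_sum (x y : color) (A : {set cE G}) (F : cE G -> ZOp (cT G)) :
  projZ x y (\sum_(e in A) F e) = \sum_(e in A) projZ x y (F e).
Proof.
apply/ffunP => g; rewrite !ffunE sum_ffunE.
under eq_bigr do rewrite sum_ffunE.
by rewrite exchange_big; apply: eq_bigr => e _; rewrite ffunE.
Qed.

Lemma projZ_BZ (c c' : color) (e : cE G) :
  c != c' -> is_edge_of c c' e -> projZ c c' (BZ e) = BM c c' e.
Proof.
move=> cc He; apply/ffunP => g; rewrite !ffunE.
under eq_bigr do rewrite ffunE.
rewrite sum_nat_F2.
case: (pickP (fun t => (proj c c' t == g) && tcontains t e)) => [t0 /andP[Hg Hc] | none].
- have ->: g \in minor_bd c c' e by apply/imsetP; exists t0; rewrite ?inE ?(eqP Hg).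
  rewrite (big_pred1 t0) // => t /=.
  apply/idP/eqP => [/andP[Hg' Hc'] | ->]; last by rewrite Hg Hc.
  apply/eqP; apply: contraTT Hg => Hne.
  have := link_cycle Hc' Hc Hne; rewrite (eqP He).
  by rewrite -(eqP Hg') eq_sym.
- have ->: (g \in minor_bd c c' e) = false.
    apply/negbTE/imsetP => -[t]; rewrite inE => Hc Heq.
    by have := none t; rewrite /= Heq eqxx Hc.
  by rewrite big_pred0.
Qed.

Lemma projZ_BZ_other (c c' x y : color) (e : cE G) :
  c != c' -> x != y -> [set x; y] != [set c; c'] -> is_edge_of c c' e ->
  projZ x y (BZ e) = 0.
Proof.
move=> cc xy neq He; apply/ffunP => g; rewrite !ffunE.
have [z zxy zcc] := exists_notin_set2 xy neq.
pose s := ~: [set z].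
have s3 : #|s| = 3%N by rewrite cardsC1 card_ord.
have cc_s : [set c; c'] \subset s.
  by apply/subsetP => u Hu; rewrite !inE; apply: contraNneq zcc => <-.
have proj_s : ~: [set x; y] \subset s.
  by apply/subsetP => u; rewrite !inE; apply: contraNneq => ->; rewrite -in_set2.
under eq_bigr do rewrite ffunE.
rewrite sum_nat_F2 (partition_big (fun t => tf t s) predT) //=.
apply: big1 => f _.
case: (pickP (fun t => [&& proj x y t == g, tcontains t e & tf t s == f]))
  => [t0 /and3P[Hg Hc /eqP Hf] | none]; last first.
  by apply: big1 => t /andP[/andP[H1 H2] H3]; have := none t; rewrite /= H1 H2 H3.
have fibre_contributes : forall t, tf t s = tf t0 s ->
    (proj x y t == g) && tcontains t e.
  move=> t Ht; rewrite /proj (te_eq_of_tf_eq s3 Ht proj_s (cardsC2 xy)) Hg /=.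
  apply/existsP; exists [set c; c']; rewrite cards2 cc eqxx /=.
  by rewrite (te_eq_of_tf_eq s3 Ht cc_s) ?cards2 ?cc ?(te_of_tcontains He Hc).
transitivity (\sum_(t in [set t | tf t (fcol f) == f]) (1 : 'F_2)).
  apply: eq_bigl => t; rewrite inE -Hf tf_col //.
  apply/idP/idP => [/andP[] // | /eqP Ht]; by rewrite fibre_contributes // Ht eqxx.
by rewrite sumr_const tri_two; apply: val_inj.
Qed.

End Projections.

Theorem lemma11 (G : colex3) (c c' : color) (Hcc : c != c')
    (S : ZOp (cE G)) :
  toric_Zstab c c' S ->
  exists Sbar : ZOp (cT G),
    cc_Zstab Sbar /\ projZ c c' Sbar = S /\
    (forall x y : color, x != y -> [set x; y] != [set c; c'] ->
       projZ x y Sbar = 0).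
Proof.
move=> [A [HA ->]].
exists (\sum_(e in A) BZ e); split; first by exists A.
split=> [|x y xy neq]; rewrite projZ_sum.
  by apply: eq_bigr => e /HA; apply: projZ_BZ.
by apply: big1 => e /HA; apply: projZ_BZ_other.
Qed.
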